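(* Let $b>0$ and let $F,x_0,x_\infty,\mathbb{S}_2$ be as in the context. For any $(x,y)\in\mathbb{S}_2$ there exists a unique solution $z=z(x,y)$ of $y-z=F(x-\alpha z)$. Moreover $z(x,y)\in\big(\frac{x-x_0}{\alpha},\frac{x-x_\infty}{\alpha}\wedge y\big]$, $z(x,F(x))=0$ for every $x\in(x_\infty,x_0)$, and $z(x,y)=\frac{x-x_0}{\alpha}$ for every $(x,y)\in\mathbb{R}\times(0,\infty)$ with $x\ge x_0$ and $y=\frac{x-x_0}{\alpha}$.
   Context: Constants: $a\in\mathbb{R}$, $b>0$, $\sigma>0$, $\rho>0$, $c>0$, $\alpha>0$. $\psi(x)=e^{\frac{(bx-a)^2}{2\sigma^2 b}}D_{-\rho/b}\big(-\frac{bx-a}{\sigma b}\sqrt{2b}\big)$ with $D_\beta(x)=\frac{e^{-x^2/4}}{\Gamma(-\beta)}\int_0^\infty t^{-\beta-1}e^{-t^2/2-xt}dt$ ($\beta<0$); $\psi$ is the positive strictly increasing fundamental solution of $\frac12\sigma^2u''+(a-bx)u'-\rho u=0$. $x_0$ (resp. $x_\infty$) is the unique solution on $(c,\infty)$ of $(x-c)\psi'(x)-\psi(x)=0$ (resp. $(x-c)\psi''(x)-\psi'(x)=0$); $c<x_\infty<x_0$. For $x\in(x_\infty,x_0]$, $F(x)=\int_x^{x_0}\Theta(z)dz$ with $\Theta(z)=\frac{[\psi'''(z)((z-c)\psi'(z)-\psi(z))-\psi''(z)((z-c)\psi''(z)-\psi'(z))]\psi(z)}{-\alpha[\psi''(z)\psi(z)-\psi'(z)^2][(z-c)\psi''(z)-\psi'(z)]}$;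 $F$ is a strictly decreasing continuous bijection of $(x_\infty,x_0]$ onto $[0,\infty)$ with $F(x_0)=0$, and $F^{-1}$ denotes its inverse. $\mathbb{S}_2=\{(x,y)\in\mathbb{R}\times(0,\infty):x\ge F^{-1}(y),\ y>(x-x_0)/\alpha\}$. *)

From Stdlib Require Import Reals Lra ClassicalEpsilon.
From Coquelicot Require Import Coquelicot.
Open Scope R_scope.

Definition Gamma (s : R) : R :=
  RInt_gen (fun t => Rpower t (s - 1) * exp (- t)) (at_right 0) (Rbar_locally p_infty).

(* Parabolic cylinder function, for beta < 0:
   D_beta(x) = e^{-x^2/4}/Gamma(-beta) * int_0^oo t^(-beta-1) e^(-t^2/2 - x t) dt *)
Definition Dpc (beta x : R) : R :=
  exp (- x ^ 2 / 4) / Gamma (- beta) *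
  RInt_gen (fun t => Rpower t (- beta - 1) * exp (- t ^ 2 / 2 - x * t))
           (at_right 0) (Rbar_locally p_infty).

Definition psi (a b sigma rho : R) (x : R) : R :=
  exp ((b * x - a) ^ 2 / (2 * sigma ^ 2 * b)) *
  Dpc (- rho / b) (- (b * x - a) / (sigma * b) * sqrt (2 * b)).

Definition dpsi (a b sigma rho : R) (k : nat) (x : R) : R :=
  Derive_n (psi a b sigma rho) k x.

Definition Theta (a b sigma rho c alpha : R) (z : R) : R :=
  let p0 := dpsi a b sigma rho 0 z in
  let p1 := dpsi a b sigma rho 1 z in
  let p2 := dpsi a b sigma rho 2 z in
  let p3 := dpsi a b sigma rho 3 z in
  ((p3 * ((z - c) * p1 - p0) - p2 * ((z - c) * p2 - p1)) * p0) /
  (- alpha * (p2 * p0 - p1 ^ 2) * ((z - c) * p2 - p1)).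

(* F(x) = int_x^{x0} Theta(z) dz  (meaningful for x in (x_inf, x0]) *)
Definition Ffun (a b sigma rho c alpha x0 : R) (x : R) : R :=
  RInt (Theta a b sigma rho c alpha) x x0.

Definition Finv (a b sigma rho c alpha xinf x0 : R) (y : R) : R :=
  epsilon (inhabits 0)
    (fun u => xinf < u <= x0 /\ Ffun a b sigma rho c alpha x0 u = y).

Definition inS2 (a b sigma rho c alpha xinf x0 : R) (x y : R) : Prop :=
  0 < y /\ Finv a b sigma rho c alpha xinf x0 y <= x /\ y > (x - x0) / alpha.

Definition solves (a b sigma rho c alpha xinf x0 : R) (x y z : R) : Prop :=
  xinf < x - alpha * z <= x0 /\
  y - z = Ffun a b sigma rho c alpha x0 (x - alpha * z).

(** The map [z |-> z + F (x - alpha z)] is strictly increasing wherever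
    [x - alpha z] stays in [(x_inf, x0]], because [F] is strictly decreasing;
    this gives uniqueness.  For existence, substitute [u = x - alpha z]: one
    needs a root of [u |-> y - (x - u)/alpha - F u] on [[F^-1 y, x0]], where it
    is [<= 0] at the left end (since [x >= F^-1 y]) and [> 0] at [x0] (since
    [F x0 = 0] and [y > (x - x0)/alpha]); the intermediate value theorem
    applies. *)
From Stdlib Require Import Reals Lra Psatz ClassicalEpsilon.
From Coquelicot Require Import Coquelicot.
Open Scope R_scope.

Definition clamp (l h v : R) : R := Rmax l (Rmin v h).

Lemma clamp_id (l h v : R) : l <= v <= h -> clamp l h v = v.
Proof. intros Hv; unfold clamp, Rmax, Rmin; repeat destruct Rle_dec; lra. Qed.

Lemma clamp_between (l h v : R) : l <= h -> l <= clamp l h v <= h.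
Proof. intros Hlh; unfold clamp, Rmax, Rmin; repeat destruct Rle_dec; lra. Qed.

Lemma clamp_1_lipschitz (l h u v : R) : l <= h ->
  Rabs (clamp l h v - clamp l h u) <= Rabs (v - u).
Proof. intros Hlh; unfold clamp, Rmax, Rmin; repeat destruct Rle_dec; split_Rabs; lra. Qed.

(* Lets [IVT_gen], which wants continuity on all of [R], be used for
   functions that are only continuous relative to [[l, h]]. *)
Lemma continuity_pt_comp_clamp (f : R -> R) (D : R -> Prop) (l h : R) :
  l <= h -> (forall v, l <= v <= h -> D v) ->
  (forall v, l <= v <= h -> filterlim f (within D (locally v)) (locally (f v))) ->
  forall u, continuity_pt (fun v => f (clamp l h v)) u.
Proof.
  intros Hlh HD Hf u. apply continuity_pt_filterlim.
  apply (filterlim_comp _ _ _ (clamp l h) f _ (within D (locally (clamp l h u)))).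
  - intros P [eps Heps]. exists eps. intros v Hv. apply Heps.
    + change (Rabs (clamp l h v - clamp l h u) < eps).
      eapply Rle_lt_trans; [apply clamp_1_lipschitz; exact Hlh | exact Hv].
    + apply HD, clamp_between, Hlh.
  - apply Hf, clamp_between, Hlh.
Qed.

Lemma filterlim_Rminus {T : Type} {G : (T -> Prop) -> Prop} {FG : Filter G}
  (f g : T -> R) (a b : R) :
  filterlim f G (locally a) -> filterlim g G (locally b) ->
  filterlim (fun t => f t - g t) G (locally (a - b)).
Proof.
  intros Hf Hg.
  eapply filterlim_comp_2 with (h := Rplus); [exact Hf | |].
  - exact (filterlim_comp _ _ _ g Ropp _ (locally b) _ Hg (filterlim_opp b)).
  - exact (filterlim_plus (V := R_NormedModule) a (- b)).
Qed.

Lemma IVT_within (g : R -> R) (D : R -> Prop) (l h : R) :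
  l <= h -> (forall v, l <= v <= h -> D v) ->
  (forall v, l <= v <= h -> filterlim g (within D (locally v)) (locally (g v))) ->
  g l <= 0 -> 0 < g h -> exists u, l <= u < h /\ g u = 0.
Proof.
  intros Hlh HD Hg Hl Hh.
  destruct (IVT_gen (fun v => g (clamp l h v)) l h 0
              (continuity_pt_comp_clamp g D l h Hlh HD Hg)) as [u [Hu Hgu]].
  { rewrite !clamp_id by lra. unfold Rmin, Rmax; repeat destruct Rle_dec; lra. }
  rewrite Rmin_left, Rmax_right in Hu by lra.
  rewrite clamp_id in Hgu by lra.
  exists u. split; [|exact Hgu].
  split; [lra|]. destruct (Req_dec u h); [subst; lra | lra].
Qed.

Section ImplicitEquation.

Variables (F : R -> R) (xinf x0 alpha : R).
Hypothesis alpha_gt0 : 0 < alpha.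
Hypothesis xinf_lt_x0 : xinf < x0.
Hypothesis F_decr : forall u v, xinf < u -> u < v -> v <= x0 -> F v < F u.
Hypothesis F_cont : forall u, xinf < u <= x0 ->
  filterlim F (within (fun v => xinf < v <= x0) (locally u)) (locally (F u)).
Hypothesis F_ge0 : forall u, xinf < u <= x0 -> 0 <= F u.
Hypothesis F_x0 : F x0 = 0.

Definition is_solution (x y z : R) : Prop :=
  xinf < x - alpha * z <= x0 /\ y - z = F (x - alpha * z).

Lemma is_solution_unique (x y z1 z2 : R) :
  is_solution x y z1 -> is_solution x y z2 -> z1 = z2.
Proof.
  intros [D1 E1] [D2 E2].
  destruct (Rtotal_order z1 z2) as [L | [L | L]]; [| exact L |].
  - assert (F (x - alpha * z1) < F (x - alpha * z2)) by (apply F_decr; nra). lra.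
  - assert (F (x - alpha * z2) < F (x - alpha * z1)) by (apply F_decr; nra). lra.
Qed.

Lemma is_solution_of_root (x y u : R) :
  xinf < u <= x0 -> y - (x - u) / alpha = F u -> is_solution x y ((x - u) / alpha).
Proof.
  intros Hu Hy. unfold is_solution.
  replace (x - alpha * ((x - u) / alpha)) with u by (field; lra).
  split; assumption.
Qed.

Lemma is_solution_on_graph (x : R) : xinf < x <= x0 -> is_solution x (F x) 0.
Proof.
  intros Hx. unfold is_solution. rewrite Rmult_0_r, !Rminus_0_r. split; auto.
Qed.

Lemma is_solution_on_boundary (x : R) :
  is_solution x ((x - x0) / alpha) ((x - x0) / alpha).
Proof. apply is_solution_of_root; [lra | rewrite F_x0; ring]. Qed.

Lemma is_solution_exists (x y u0 : R) :
  xinf < u0 <= x0 -> F u0 = y -> u0 <= x -> (x - x0) / alpha < y ->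
  exists z, is_solution x y z /\
    (x - x0) / alpha < z /\ z <= Rmin ((x - xinf) / alpha) y.
Proof.
  intros Hu0 Fu0 Hx Hy.
  destruct (IVT_within (fun u => y - (x - u) / alpha - F u)
              (fun v => xinf < v <= x0) u0 x0) as [u [Hu Gu]].
  - lra.
  - intros v Hv; lra.
  - intros v Hv. apply filterlim_Rminus; [|apply F_cont; lra].
    eapply filterlim_filter_le_1; [apply filter_le_within|].
    apply (ex_derive_continuous (K := R_AbsRing) (V := R_NormedModule)
             (fun u => y - (x - u) / alpha)).
    auto_derive. lra.
  - rewrite Fu0. assert (0 <= (x - u0) / alpha) by (apply Rdiv_le_0_compat; lra). lra.
  - rewrite F_x0. lra.
  - assert (Fu : 0 <= F u) by (apply F_ge0; lra).
    exists ((x - u) / alpha). split; [apply is_solution_of_root; lra|].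
    split; [apply Rmult_lt_compat_r; [apply Rinv_0_lt_compat|]; lra|].
    apply Rmin_glb; [|lra].
    apply Rmult_le_compat_r; [left; apply Rinv_0_lt_compat|]; lra.
Qed.

End ImplicitEquation.

Theorem lemma4p9 (a b sigma rho c alpha x0 xinf : R)
  (hb : 0 < b) (hsigma : 0 < sigma) (hrho : 0 < rho) (hc : 0 < c) (halpha : 0 < alpha)
  (* x0 : the unique solution on (c, oo) of (x - c) psi'(x) - psi(x) = 0 *)
  (hx0 : c < x0 /\ (x0 - c) * dpsi a b sigma rho 1 x0 - dpsi a b sigma rho 0 x0 = 0)
  (hx0u : forall x, c < x ->
     (x - c) * dpsi a b sigma rho 1 x - dpsi a b sigma rho 0 x = 0 -> x = x0)
  (* x_inf : the unique solution on (c, oo) of (x - c) psi''(x) - psi'(x) = 0 *)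
  (hxi : c < xinf /\ (xinf - c) * dpsi a b sigma rho 2 xinf - dpsi a b sigma rho 1 xinf = 0)
  (hxiu : forall x, c < x ->
     (x - c) * dpsi a b sigma rho 2 x - dpsi a b sigma rho 1 x = 0 -> x = xinf)
  (hord : c < xinf < x0)
  (* F is a strictly decreasing continuous bijection of (x_inf, x0] onto [0, oo) *)
  (hFdec : forall u v, xinf < u -> u < v -> v <= x0 ->
     Ffun a b sigma rho c alpha x0 v < Ffun a b sigma rho c alpha x0 u)
  (hFcont : forall u, xinf < u <= x0 ->
     filterlim (Ffun a b sigma rho c alpha x0)
       (within (fun v => xinf < v <= x0) (locally u))
       (locally (Ffun a b sigma rho c alpha x0 u)))
  (hFrange : forall u, xinf < u <= x0 -> 0 <= Ffun a b sigma rho c alpha x0 u)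
  (hFonto : forall y, 0 <= y -> exists u, xinf < u <= x0 /\ Ffun a b sigma rho c alpha x0 u = y) :
  (forall x y, inS2 a b sigma rho c alpha xinf x0 x y ->
     exists z, solves a b sigma rho c alpha xinf x0 x y z /\
       (forall z', solves a b sigma rho c alpha xinf x0 x y z' -> z' = z) /\
       (x - x0) / alpha < z /\ z <= Rmin ((x - xinf) / alpha) y) /\
  (forall x, xinf < x < x0 ->
     solves a b sigma rho c alpha xinf x0 x (Ffun a b sigma rho c alpha x0 x) 0 /\
     (forall z, solves a b sigma rho c alpha xinf x0 x (Ffun a b sigma rho c alpha x0 x) z -> z = 0)) /\
  (forall x y, 0 < y -> x0 <= x -> y = (x - x0) / alpha ->
     solves a b sigma rho c alpha xinf x0 x y ((x - x0) / alpha) /\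
     (forall z, solves a b sigma rho c alpha xinf x0 x y z -> z = (x - x0) / alpha)).
Proof.
  set (F := Ffun a b sigma rho c alpha x0).
  assert (F_x0 : F x0 = 0) by exact (RInt_point x0 _).
  assert (Hlt : xinf < x0) by lra.
  pose proof (is_solution_unique F xinf x0 alpha halpha hFdec) as Huniq.
  split; [|split].
  - intros x y (Hy & HFinv & Hyx).
    assert (Hu0 : xinf < Finv a b sigma rho c alpha xinf x0 y <= x0 /\
                  F (Finv a b sigma rho c alpha xinf x0 y) = y)
      by (unfold Finv; apply epsilon_spec, hFonto; lra).
    destruct (is_solution_exists F xinf x0 alpha halpha hFcont hFrange F_x0
                x y _ (proj1 Hu0) (proj2 Hu0) HFinv Hyx) as (z & Hz & Hbounds).
    exists z. split; [exact Hz | split; [|exact Hbounds]].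
    intros z' Hz'. exact (Huniq _ _ _ _ Hz' Hz).
  - intros x Hx. pose proof (is_solution_on_graph F xinf x0 alpha x ltac:(lra)) as Hz.
    split; [exact Hz|]. intros z Hz'. exact (Huniq _ _ _ _ Hz' Hz).
  - intros x y _ _ ->.
    pose proof (is_solution_on_boundary F xinf x0 alpha halpha Hlt F_x0 x) as Hz.
    split; [exact Hz|]. intros z Hz'. exact (Huniq _ _ _ _ Hz' Hz).
Qed.
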